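(* Let $\mathcal E$ be a nonlinear order preserving form on $L^2(\mu)$. Then $\||f|\|_L\le\|f\|_L$ for all $f\in M(\mathcal E)$. If $\mathcal E$ is a nonlinear Dirichlet form, then $\|Cf\|_L\le\|f\|_L$ for all normal contractions $C\colon\mathbb R\to\mathbb R$ and all $f\in M(\mathcal E)$.
   Context: $(X,\mathfrak A,\mu)$ is a $\sigma$-finite measure space. All convex functionals $\mathcal E\colon L^2(\mu)\to[0,\infty]$ are assumed symmetric ($\mathcal E(-f)=\mathcal E(f)$) with $\mathcal E(0)=0$. A normal contraction is a 1-Lipschitz $C\colon\mathbb R\to\mathbb R$ with $C(0)=0$; it operates on $\mathcal E$ if $\mathcal E(f+Cg)+\mathcal E(f-Cg)\le\mathcal E(f+g)+\mathcal E(f-g)$ for all $f,g\in L^2(\mu)$. A nonlinear order preserving form is a lower semicontinuous convex such $\mathcal E$ on which $x\mapsto|x|$ operates; a nonlinear Dirichlet form is one on which all normal contractions operate. $M(\mathcal E)=\{f:\lim_{\lambda\to0+}\mathcal E(\lambda f)=0\}$ and $\|f\|_L=\inf\{\lambda>0:\mathcal E(\lambda^{-1}f)\le1\}$ for $f\in M(\mathcal E)$. *)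

From HB Require Import structures.
From mathcomp Require Import all_boot all_order all_algebra.
From mathcomp Require Import all_classical all_reals all_analysis.
Set Implicit Arguments. Unset Strict Implicit. Unset Printing Implicit Defensive.
Import Order.TTheory GRing.Theory Num.Theory.
Import numFieldNormedType.Exports.
Local Open Scope classical_set_scope.
Local Open Scope ring_scope.

(* L^2(mu) is modelled by square integrable measurable functions
   (f \in Lfun mu 2), i.e. representatives.  A functional is
   a map E : (T -> R) -> \bar R, only ever evaluated on L^2 functions. *)

Section Defs.
Context {d : measure_display} {T : measurableType d} {R : realType}.
Variable mu : {measure set T -> \bar R}.

Definition L2 (f : T -> R) : Prop := f \in Lfun mu 2%:E.

Definition convex_functional (E : (T -> R) -> \bar R) : Prop :=
  [/\ forall f, L2 f -> (0 <= E f)%E,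
      forall f g (t : R), L2 f -> L2 g -> 0 <= t <= 1 ->
        (E (fun x => (t * f x + (1 - t) * g x)%R)
          <= t%:E * E f + (1 - t)%R%:E * E g)%E,
      forall f, L2 f -> E (fun x => (- f x)%R) = E f &
      E (fun _ => 0) = 0%E].

Definition L2_lsc (E : (T -> R) -> \bar R) : Prop :=
  forall (fn : nat -> T -> R) (f : T -> R),
    (forall n, L2 (fn n)) -> L2 f ->
    (('N[mu]_2%:E[EFin \o (fn n \- f)%R])%E @[n --> \oo] --> 0%E) ->
    forall a : R, (a%:E < E f)%E -> \forall n \near \oo, (a%:E < E (fn n))%E.

Definition normal_contraction (C : R -> R) : Prop :=
  C 0 = 0 /\ forall x y, `|C x - C y| <= `|x - y|.

Definition operates (C : R -> R) (E : (T -> R) -> \bar R) : Prop :=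
  forall f g, L2 f -> L2 g ->
    (E (fun x => (f x + C (g x))%R) + E (fun x => (f x - C (g x))%R)
      <= E (fun x => (f x + g x)%R) + E (fun x => (f x - g x)%R))%E.

Definition order_preserving_form (E : (T -> R) -> \bar R) : Prop :=
  [/\ convex_functional E, L2_lsc E & operates (fun x => `|x|) E].

Definition dirichlet_form (E : (T -> R) -> \bar R) : Prop :=
  [/\ convex_functional E, L2_lsc E &
      forall C, normal_contraction C -> operates C E].

Definition ME (E : (T -> R) -> \bar R) (f : T -> R) : Prop :=
  L2 f /\ (E (fun x => l * f x) @[l --> 0^'+] --> 0%E).

Definition normL (E : (T -> R) -> \bar R) (f : T -> R) : \bar R :=
  ereal_inf [set l%:E | l in [set l : R | 0 < l /\ (E (fun x => (l^-1 * f x)%R) <= 1)%E]].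

End Defs.

From mathcomp Require Import lra.
From HB Require Import structures.
From mathcomp Require Import all_boot all_order all_algebra.
From mathcomp Require Import all_classical all_reals all_analysis.
Set Implicit Arguments. Unset Strict Implicit. Unset Printing Implicit Defensive.
Import Order.TTheory GRing.Theory Num.Theory.
Import numFieldNormedType.Exports.
Local Open Scope classical_set_scope.
Local Open Scope ring_scope.

(* Taking f = 0 in the definition of "C operates on E" and using the symmetry
   of E gives 2 E(C o h) <= 2 E(h).  For l > 0, the rescaled map
   x |-> l^-1 C(l x) is again a normal contraction (it is |.| itself when
   C = |.|) and sends l^-1 f to l^-1 (C o f), so every l admissible in the
   infimum defining ||f||_L is admissible for C o f. *)

Lemma lee_double (R : realDomainType) (x y : \bar R) :
  (x + x <= y + y)%E = (x <= y)%E.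
Proof.
case: x y => [r| |] [s| |] //=; rewrite ?leey ?leNye //.
by rewrite -!EFinD !lee_fin; apply/idP/idP; lra.
Qed.

Section normal_contraction.
Variable R : realType.
Implicit Types C : R -> R.

Lemma normal_contraction_norm : normal_contraction (@Num.norm _ R).
Proof. by split; [exact: normr0 | exact: ler_dist_dist]. Qed.

Lemma normal_contraction_norm_le C x :
  normal_contraction C -> `|C x| <= `|x|.
Proof. by case=> C0 /(_ x 0); rewrite C0 !subr0. Qed.

Lemma normal_contraction_continuous C : normal_contraction C -> continuous C.
Proof.
case=> _ HC x; apply/cvgrPdist_lt => e e0; near=> y.
apply: le_lt_trans (HC x y) _.
by near: y; apply: cvgr_dist_lt => //; exact: cvg_id.
Unshelve. all: by end_near. Qed.

Definition rescaled C (l : R) x := l^-1 * C (l * x).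

Lemma rescaledE C l x : l != 0 -> l^-1 * C x = rescaled C l (l^-1 * x).
Proof. by move=> l0; rewrite /rescaled mulrA mulfV // mul1r. Qed.

Lemma normal_contraction_rescaled C l :
  0 < l -> normal_contraction C -> normal_contraction (rescaled C l).
Proof.
move=> l0 [C0 HC]; split; first by rewrite /rescaled mulr0 C0 mulr0.
move=> x y; rewrite /rescaled -mulrBr normrM gtr0_norm ?invr_gt0 //.
rewrite ler_pdivrMl // -[in leRHS](gtr0_norm l0) -normrM mulrBr.
exact: HC.
Qed.

Lemma rescaled_norm l : 0 < l -> rescaled Num.norm l = Num.norm.
Proof.
move=> l0; apply/funext => x.
by rewrite /rescaled normrM gtr0_norm // mulKf ?gt_eqF.
Qed.

End normal_contraction.

Section Lfun_domination.
Context d (T : measurableType d) (R : realType).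
Variable mu : {measure set T -> \bar R}.

Lemma le_Lnorm (p : R) (f g : T -> R) : 0 <= p ->
  measurable_fun setT f -> measurable_fun setT g ->
  (forall x, `|g x| <= `|f x|) ->
  ('N[mu]_p%:E[EFin \o g] <= 'N[mu]_p%:E[EFin \o f])%E.
Proof.
move=> p0 mf mg gf; rewrite unlock /=; apply: gt0_ler_poweR.
- by rewrite invr_ge0.
- by rewrite in_itv /= leey integral_ge0 // => x _; exact: poweR_ge0.
- by rewrite in_itv /= leey integral_ge0 // => x _; exact: poweR_ge0.
apply: ge0_le_integral => //.
- apply/measurable_realfun.measurable_EFinP.
  exact/(measurableT_comp (measurable_realfun.measurable_powR _))/measurableT_comp.
- apply/measurable_realfun.measurable_EFinP.
  exact/(measurableT_comp (measurable_realfun.measurable_powR _))/measurableT_comp.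
by move=> x _; rewrite lee_fin ge0_ler_powR.
Qed.

Lemma Lfun_dominated (p : R) (f g : T -> R) : 0 <= p ->
  measurable_fun setT g -> (forall x, `|g x| <= `|f x|) ->
  f \in Lfun mu p%:E -> g \in Lfun mu p%:E.
Proof.
move=> p0 mg gf /andP[]; rewrite !inE /= /finite_norm => mf fin.
apply/andP; split; rewrite inE //= /finite_norm.
by apply: le_lt_trans fin; exact: le_Lnorm.
Qed.

End Lfun_domination.

Section L2_stability.
Context d (T : measurableType d) (R : realType).
Variable mu : {measure set T -> \bar R}.

Lemma L2_normal_contraction (C : R -> R) (h : T -> R) :
  normal_contraction C -> L2 mu h -> L2 mu (C \o h).
Proof.
move=> HC hL; have /andP[+ _] := hL; rewrite inE => mh.
apply: (Lfun_dominated (f := h)) hL => //.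
- apply: measurableT_comp mh.
  apply: measurable_realfun.continuous_measurable_fun.
  exact: normal_contraction_continuous HC.
- by move=> x; exact: normal_contraction_norm_le.
Qed.

Lemma L2_scale (a : R) (h : T -> R) : L2 mu h -> L2 mu (fun x => a * h x).
Proof.
suff -> : (fun x => a * h x) = a \o* h by exact: Lfun_scale (ler1n R 2).
by apply/funext => x /=; rewrite mulrC.
Qed.

End L2_stability.

Lemma normL_le_sublevel d (T : measurableType d) (R : realType)
    (E : (T -> R) -> \bar R) (f g : T -> R) :
  (forall l : R, 0 < l -> (E (fun x => (l^-1 * f x)%R) <= 1)%E ->
     (E (fun x => (l^-1 * g x)%R) <= 1)%E) ->
  (normL E g <= normL E f)%E.
Proof.
move=> fg; apply: ereal_inf_le_tmp => _ [l [l0 El] <-].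
by exists l => //; split => //; exact: fg.
Qed.

Section contraction_decreases.
Context d (T : measurableType d) (R : realType).
Variables (mu : {measure set T -> \bar R}) (E : (T -> R) -> \bar R).
Hypothesis E_sym : forall f, L2 mu f -> E (fun x => - f x) = E f.

Lemma operates_comp_le (C : R -> R) (h : T -> R) :
  normal_contraction C -> operates mu C E -> L2 mu h -> (E (C \o h) <= E h)%E.
Proof.
move=> HC CE hL.
have L0 : L2 mu (fun _ => 0).
  by apply: (Lfun_dominated (f := h)) => // x; rewrite normr0.
have E0D g : E (fun x => 0 + g x) = E g by congr E; apply/funext => x; rewrite add0r.
have := CE _ _ L0 hL; rewrite !E0D !E_sym ?lee_double //.
exact: L2_normal_contraction.
Qed.

Lemma normL_normal_contraction_le (C : R -> R) (f : T -> R) :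
  normal_contraction C -> (forall l, 0 < l -> operates mu (rescaled C l) E) ->
  L2 mu f -> (normL E (C \o f) <= normL E f)%E.
Proof.
move=> HC CE fL; apply: normL_le_sublevel => l l0; apply: le_trans.
under eq_fun do rewrite (rescaledE _ _ (lt0r_neq0 l0)).
apply: operates_comp_le; [exact: normal_contraction_rescaled | exact: CE |].
exact: L2_scale.
Qed.

End contraction_decreases.

Theorem lemma3p3 (d : measure_display) (T : measurableType d) (R : realType)
  (mu : {measure set T -> \bar R}) (hmu : sigma_finite [set: T] mu)
  (E : (T -> R) -> \bar R) :
  (order_preserving_form mu E ->
     forall f, ME mu E f -> (normL E (fun x => (`|f x|)%R) <= normL E f)%E) /\
  (dirichlet_form mu E ->
     forall (C : R -> R), normal_contraction C ->
     forall f, ME mu E f -> (normL E (fun x => C (f x)) <= normL E f)%E).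
Proof.
split.
- move=> [[_ _ E_sym _] _ absE] f [fL _].
  apply: (normL_normal_contraction_le E_sym (normal_contraction_norm R)) fL.
  by move=> l l0; rewrite rescaled_norm.
- move=> [[_ _ E_sym _] _ CE] C HC f [fL _].
  apply: (normL_normal_contraction_le E_sym HC) fL => l l0.
  exact/CE/normal_contraction_rescaled.
Qed.
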